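(* Let $0<\alpha<\pi$, $\varepsilon=e^{i\alpha}$ and $0<c<2$. Then there exists a sequence $(x_n)_{n\ge0}$ of complex numbers with $x_n=e^{i\beta_n}$, $0<\beta_n<\alpha$ for all $n\ge0$, satisfying for every $n\ge0$ $$(n+1)(x_n^2-1)\frac{x_{n+1}+x_n/\varepsilon}{\varepsilon+x_nx_{n+1}}-n\left(1-\frac{x_n^2}{\varepsilon^2}\right)\frac{x_{n-1}+\varepsilon x_n}{\varepsilon+x_{n-1}x_n}=c\,x_n\frac{\varepsilon^2-1}{2\varepsilon^2}$$ (for $n=0$ the second term on the left is omitted).
   Context: This is a discrete Painlevé-type equation; the denominators $\varepsilon+x_nx_{n+1}$ are nonzero along the solution. *)

From Stdlib Require Import Reals.
From Coquelicot Require Import Coquelicot.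
Open Scope R_scope.

Definition cis (b : R) : C := (cos b, sin b).

Definition term1 (eps : C) (n : nat) (xn xn1 : C) : C :=
  (RtoC (INR (S n)) * (xn * xn - 1) * ((xn1 + xn / eps) / (eps + xn * xn1)))%C.

Definition term2 (eps : C) (n : nat) (xnm1 xn : C) : C :=
  (RtoC (INR n) * (1 - xn * xn / (eps * eps)) * ((xnm1 + eps * xn) / (eps + xnm1 * xn)))%C.

Definition rhs (eps : C) (c : R) (xn : C) : C :=
  (RtoC c * xn * ((eps * eps - 1) / (2 * (eps * eps))))%C.

From Stdlib Require Import Reals Lra Lia ClassicalEpsilon.
From Coquelicot Require Import Coquelicot.
Open Scope R_scope.

(* Parametrise the unit circle by half-angle tangents: x_n = e^(i b_n) = cayley t_n with
   t_n = tan (b_n / 2), and eps = cayley a with a = tan (alpha / 2).  Both fractions of the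
   equation are then real multiples of 1/eps and of 1, and after division by i x_n / eps the
   equation becomes the real recurrence
     (n+1) sin b_n r_n = c sin alpha / 2 + n sin (alpha - b_n) r_(n-1),
   where r_n = rho a t_n t_(n+1) decreases in t_(n+1) from 1 (at t_(n+1) = 0) to
   rho_min a t_n (at t_(n+1) = a).  Thus t_(n+1) in (0, a) exists iff r_n lies in that band.
   We shoot on t_0: inductively there are nested segments of starting values on which the
   first N steps are admissible while r_N runs from above 1 to below rho_min.  Where r_N
   crosses the band, t_(N+1) runs from 0 to a; near t_(N+1) = 0 the recurrence forces
   r_(N+1) > 1, and near t_(N+1) = a it gives r_(N+1) close to c / (2 (N+2)) < 1, the value of
   rho_min there, because c < 2.  A point common to all segments starts an orbit that never
   leaves (0, a). *)

(* [tsin (tan (th / 2)) = sin th], and [atan_sub] is the tangent subtraction formula. *)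
Definition tsin (t : R) : R := 2 * t / (1 + t * t).

Definition rho (a u v : R) : R := (1 - atan_sub a u * v) / (1 + atan_sub a u * v).

Definition rho_min (a u : R) : R := rho a u a.

Definition rho_inv (a u r : R) : R := (1 - r) / ((1 + r) * atan_sub a u).

Lemma one_add_sqr_pos (t : R) : 0 < 1 + t * t.
Proof. nra. Qed.

Lemma tsin_pos (t : R) : 0 < t -> 0 < tsin t.
Proof. intros Ht. apply Rdiv_lt_0_compat; [lra | apply one_add_sqr_pos]. Qed.

Lemma tsin_0 : tsin 0 = 0.
Proof. unfold tsin. field. Qed.

Lemma atan_sub_0_r (a : R) : atan_sub a 0 = a.
Proof. unfold atan_sub. field. Qed.

Lemma atan_sub_diag (a : R) : atan_sub a a = 0.
Proof. unfold atan_sub. rewrite Rminus_diag. apply Rdiv_0_l. Qed.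

Lemma atan_sub_ge0 (a u : R) : 0 <= u <= a -> 0 <= atan_sub a u.
Proof. intros Hu. apply Rdiv_le_0_compat; nra. Qed.

Lemma atan_sub_pos (a u : R) : 0 <= u < a -> 0 < atan_sub a u.
Proof. intros Hu. apply Rdiv_lt_0_compat; nra. Qed.

Lemma rho_min_bounds (a u : R) : 0 < a -> 0 < u < a -> -1 < rho_min a u < 1.
Proof.
  intros Ha Hu. pose proof (atan_sub_pos a u ltac:(lra)) as Hs.
  unfold rho_min, rho. set (s := atan_sub a u) in *.
  assert (Hsa : 0 < s * a) by nra.
  split.
  - apply Rlt_div_r; lra.
  - apply Rlt_div_l; lra.
Qed.

Lemma rho_min_diag (a : R) : rho_min a a = 1.
Proof. unfold rho_min, rho. rewrite atan_sub_diag. field. Qed.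

Lemma rho_inv_bounds (a u r : R) : 0 < a -> 0 < u < a -> rho_min a u < r < 1 ->
  0 < rho_inv a u r < a.
Proof.
  intros Ha Hu Hr. pose proof (atan_sub_pos a u ltac:(lra)) as Hs.
  pose proof (rho_min_bounds a u Ha Hu).
  unfold rho_min, rho, rho_inv in *. set (s := atan_sub a u) in *.
  assert (Hr1 : 1 - s * a < r * (1 + s * a)) by (apply Rlt_div_l; nra).
  split.
  - apply Rdiv_lt_0_compat; nra.
  - apply Rlt_div_l; nra.
Qed.

Lemma rho_rho_inv (a u r : R) : 0 < a -> 0 < u < a -> -1 < r -> rho a u (rho_inv a u r) = r.
Proof.
  intros Ha Hu Hr. pose proof (atan_sub_pos a u ltac:(lra)).
  unfold rho, rho_inv. field. split; nra.
Qed.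

Lemma rho_inv_1 (a u : R) : rho_inv a u 1 = 0.
Proof. unfold rho_inv. rewrite Rminus_diag. apply Rdiv_0_l. Qed.

Lemma rho_inv_rho_min (a u : R) : 0 < a -> 0 < u < a -> rho_inv a u (rho_min a u) = a.
Proof.
  intros Ha Hu. pose proof (atan_sub_pos a u ltac:(lra)).
  unfold rho_inv, rho_min, rho. field. split; nra.
Qed.

Definition cayley (t : R) : C := ((1 - t * t) / (1 + t * t), 2 * t / (1 + t * t)).

Ltac C_parts := apply injective_projections; simpl.

Lemma cis_2atan (t : R) : cis (2 * atan t) = cayley t.
Proof.
  unfold cis, cayley. rewrite cos_2a_cos, sin_2a, cos_atan, sin_atan.
  assert (Hq : 0 < sqrt (1 + t²)) by (apply sqrt_lt_R0; unfold Rsqr; nra).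
  assert (Hqq : sqrt (1 + t²) * sqrt (1 + t²) = 1 + t * t).
  { rewrite sqrt_sqrt; unfold Rsqr; nra. }
  pose proof (one_add_sqr_pos t).
  C_parts.
  - replace (2 * (1 / sqrt (1 + t²)) * (1 / sqrt (1 + t²)) - 1)
      with (2 / (sqrt (1 + t²) * sqrt (1 + t²)) - 1) by (field; lra).
    rewrite Hqq. field. lra.
  - replace (2 * (t / sqrt (1 + t²)) * (1 / sqrt (1 + t²)))
      with (2 * t / (sqrt (1 + t²) * sqrt (1 + t²))) by (field; lra).
    rewrite Hqq. reflexivity.
Qed.

Lemma Cdiv_eq_of_mul (z w d : C) : w <> 0%C -> z = (d * w)%C -> (z / w = d)%C.
Proof. intros Hw ->. field. exact Hw. Qed.

Lemma C_neq0_of_norm (z : C) : fst z * fst z + snd z * snd z <> 0 -> z <> 0%C.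
Proof. intros H E. subst z. simpl in H. lra. Qed.

Lemma cayley_neq0 (t : R) : cayley t <> 0%C.
Proof.
  apply C_neq0_of_norm. pose proof (one_add_sqr_pos t).
  replace (fst (cayley t) * fst (cayley t) + snd (cayley t) * snd (cayley t)) with 1.
  - lra.
  - simpl. field. lra.
Qed.

Lemma Cinv_cayley (t : R) : (/ cayley t = cayley (- t))%C.
Proof.
  rewrite <- (Cmult_1_l (/ cayley t)). apply Cdiv_eq_of_mul; [apply cayley_neq0|].
  pose proof (one_add_sqr_pos t).
  C_parts; field; lra.
Qed.

Lemma cayley_sqr_sub_1 (t : R) :
  (cayley t * cayley t - 1 = cayley t * (Ci * RtoC (2 * tsin t)))%C.
Proof. pose proof (one_add_sqr_pos t). unfold tsin. C_parts; field; lra. Qed.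

Lemma cayley_add_mul_neq0 (a t t' : R) : 0 < a -> 0 < t < a -> 0 < t' < a ->
  (cayley a + cayley t * cayley t' <> 0)%C.
Proof.
  intros Ha Ht Ht'. apply C_neq0_of_norm.
  pose proof (one_add_sqr_pos a). pose proof (one_add_sqr_pos t). pose proof (one_add_sqr_pos t').
  set (K := 1 - t * t' + a * (t + t')).
  assert (HK : 0 < K) by (unfold K; nra).
  replace (fst (cayley a + cayley t * cayley t')%C * fst (cayley a + cayley t * cayley t')%C +
           snd (cayley a + cayley t * cayley t')%C * snd (cayley a + cayley t * cayley t')%C)
    with (4 * K * K / ((1 + a * a) * (1 + t * t) * (1 + t' * t'))).
  - apply Rgt_not_eq, Rdiv_lt_0_compat; [nra|].
    apply Rmult_lt_0_compat; [apply Rmult_lt_0_compat|]; lra.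
  - unfold K. simpl. field. repeat split; lra.
Qed.

Lemma cayley_quotient_fwd (a t t' : R) : 0 < a -> 0 < t < a -> 0 < t' < a ->
  ((cayley t' + cayley t / cayley a) / (cayley a + cayley t * cayley t')
   = RtoC (rho a t t') * cayley (- a))%C.
Proof.
  intros Ha Ht Ht'. apply Cdiv_eq_of_mul; [apply cayley_add_mul_neq0; auto|].
  unfold Cdiv. rewrite Cinv_cayley.
  pose proof (one_add_sqr_pos a). pose proof (one_add_sqr_pos t). pose proof (one_add_sqr_pos t').
  assert (0 < 1 + a * t) by nra.
  assert (0 < 1 + a * t + (a - t) * t') by nra.
  unfold rho, atan_sub. C_parts; field; repeat split; nra.
Qed.

Lemma cayley_quotient_bwd (a tm t : R) : 0 < a -> 0 < tm < a -> 0 < t < a ->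
  ((cayley tm + cayley a * cayley t) / (cayley a + cayley tm * cayley t) = RtoC (rho a tm t))%C.
Proof.
  intros Ha Htm Ht. apply Cdiv_eq_of_mul; [apply cayley_add_mul_neq0; auto|].
  pose proof (one_add_sqr_pos a). pose proof (one_add_sqr_pos t). pose proof (one_add_sqr_pos tm).
  assert (0 < 1 + a * tm) by nra.
  assert (0 < 1 + a * tm + (a - tm) * t) by nra.
  unfold rho, atan_sub. C_parts; field; repeat split; nra.
Qed.

Lemma cayley_one_sub_sqr_div (a t : R) : 0 < a -> 0 < t < a ->
  (1 - cayley t * cayley t / (cayley a * cayley a)
   = cayley t * cayley (- a) * (Ci * RtoC (2 * tsin (atan_sub a t))))%C.
Proof.
  intros Ha Ht. unfold Cdiv.
  replace (/ (cayley a * cayley a))%C with (/ cayley a * / cayley a)%C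
    by (field; apply cayley_neq0).
  rewrite Cinv_cayley.
  pose proof (one_add_sqr_pos a). pose proof (one_add_sqr_pos t).
  assert (0 < 1 + a * t) by nra.
  assert (0 < (1 + a * t) * (1 + a * t) + (a - t) * (a - t)) by nra.
  unfold tsin, atan_sub. C_parts; field; repeat split; nra.
Qed.

Lemma cayley_rhs_factor (a : R) :
  ((cayley a * cayley a - 1) / (2 * (cayley a * cayley a)) = cayley (- a) * (Ci * RtoC (tsin a)))%C.
Proof.
  apply Cdiv_eq_of_mul.
  - apply Cmult_neq_0; [intros E; injection E; lra|].
    apply Cmult_neq_0; apply cayley_neq0.
  - pose proof (one_add_sqr_pos a). unfold tsin. C_parts; field; lra.
Qed.

Lemma equation_of_recurrence (a c : R) (n : nat) (tm t t' : R) :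
  0 < a -> 0 < tm < a -> 0 < t < a -> 0 < t' < a ->
  INR (S n) * tsin t * rho a t t' = c * tsin a / 2 + INR n * tsin (atan_sub a t) * rho a tm t ->
  (term1 (cayley a) n (cayley t) (cayley t') - term2 (cayley a) n (cayley tm) (cayley t))%C
  = rhs (cayley a) c (cayley t).
Proof.
  intros Ha Htm Ht Ht' Hrec.
  unfold term1, term2, rhs.
  rewrite cayley_sqr_sub_1, cayley_quotient_fwd, cayley_quotient_bwd, cayley_one_sub_sqr_div,
    cayley_rhs_factor by auto.
  transitivity (cayley t * cayley (- a) * Ci * RtoC (2 * (INR (S n) * tsin t * rho a t t')
                  - 2 * (INR n * tsin (atan_sub a t) * rho a tm t)))%C.
  - rewrite !RtoC_minus, !RtoC_mult. ring.
  - rewrite Hrec.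
    replace (2 * (c * tsin a / 2 + INR n * tsin (atan_sub a t) * rho a tm t)
             - 2 * (INR n * tsin (atan_sub a t) * rho a tm t)) with (c * tsin a) by field.
    rewrite RtoC_mult. ring.
Qed.

Ltac continuity_step :=
  match goal with
  | |- continuity_pt (fun _ => _) _ => apply continuity_pt_const; intros ? ?; reflexivity
  | |- continuity_pt (fun y => y) _ => apply continuity_pt_id
  | |- continuity_pt (fun y => @?f y + @?g y) ?x => apply (continuity_pt_plus f g x)
  | |- continuity_pt (fun y => @?f y - @?g y) ?x => apply (continuity_pt_minus f g x)
  | |- continuity_pt (fun y => @?f y * @?g y) ?x => apply (continuity_pt_mult f g x)
  | |- continuity_pt (fun y => @?f y / @?g y) ?x => apply (continuity_pt_div f g x)
  end.

Lemma continuity_pt_tsin (f : R -> R) (x : R) :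
  continuity_pt f x -> continuity_pt (fun y => tsin (f y)) x.
Proof.
  intros Hf. unfold tsin. repeat continuity_step; auto.
  cbv beta. pose proof (one_add_sqr_pos (f x)). lra.
Qed.

Lemma continuity_pt_atan_sub (a : R) (f : R -> R) (x : R) : 0 <= a -> 0 <= f x ->
  continuity_pt f x -> continuity_pt (fun y => atan_sub a (f y)) x.
Proof.
  intros Ha Hfx Hf. unfold atan_sub. repeat continuity_step; auto.
  cbv beta. nra.
Qed.

Lemma continuity_pt_rho_min (a : R) (f : R -> R) (x : R) : 0 <= f x <= a ->
  continuity_pt f x -> continuity_pt (fun y => rho_min a (f y)) x.
Proof.
  intros Hfx Hf. unfold rho_min, rho.
  assert (Hs : continuity_pt (fun y => atan_sub a (f y)) x)
    by (apply continuity_pt_atan_sub; auto; lra).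
  pose proof (atan_sub_ge0 a (f x) Hfx).
  repeat continuity_step; auto.
  cbv beta. nra.
Qed.

Ltac continuity_auto :=
  repeat first
    [ continuity_step
    | match goal with
      | |- continuity_pt (fun y => tsin (@?f y)) ?x => apply (continuity_pt_tsin f x)
      | |- continuity_pt (fun y => atan_sub ?a (@?f y)) ?x => apply (continuity_pt_atan_sub a f x)
      | |- continuity_pt (fun y => rho_min ?a (@?f y)) ?x => apply (continuity_pt_rho_min a f x)
      end ];
  cbv beta.

Definition between (p q x : R) : Prop := Rmin p q <= x <= Rmax p q.

Definition strictly_between (p q x : R) : Prop := Rmin p q < x < Rmax p q.

Ltac segment_lra :=
  unfold strictly_between, between in *;
  repeat match goal with
  | |- context [Rmin ?p ?q] =>
      destruct (Rle_lt_dec p q);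
      [ rewrite (Rmin_left p q), (Rmax_right p q) in * by lra
      | rewrite (Rmin_right p q), (Rmax_left p q) in * by lra ]
  | _ : context [Rmin ?p ?q] |- _ =>
      destruct (Rle_lt_dec p q);
      [ rewrite (Rmin_left p q), (Rmax_right p q) in * by lra
      | rewrite (Rmin_right p q), (Rmax_left p q) in * by lra ]
  end;
  lra.

Lemma between_cases (p q x : R) : between p q x -> x = p \/ x = q \/ strictly_between p q x.
Proof.
  intros Hx. destruct (Req_dec x p) as [|Hp]; [now left|].
  destruct (Req_dec x q) as [|Hq]; [now right; left|].
  right; right. segment_lra.
Qed.

Lemma continuity_pt_pos_near (f : R -> R) (x : R) : continuity_pt f x -> 0 < f x ->
  exists d, 0 < d /\ forall y, Rabs (y - x) < d -> 0 < f y.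
Proof.
  intros Hc Hx.
  destruct (Hc (f x) Hx) as [d [Hd Hy]].
  exists d. split; [exact Hd|]. intros y Hyd.
  destruct (Req_dec y x) as [->|Hne]; [exact Hx|].
  specialize (Hy y (conj (conj I (not_eq_sym Hne)) Hyd)).
  simpl in Hy. unfold R_dist in Hy. apply Rabs_def2 in Hy. lra.
Qed.

Lemma exists_pos_strictly_between (f : R -> R) (p q : R) :
  p <> q -> continuity_pt f p -> 0 < f p -> exists x, strictly_between p q x /\ 0 < f x.
Proof.
  intros Hpq Hc Hp. destruct (continuity_pt_pos_near f p Hc Hp) as [d [Hd Hy]].
  set (e := Rmin (d / 2) (Rabs (q - p) / 2)).
  assert (He : 0 < e).
  { apply Rmin_pos; [lra|]. apply Rdiv_lt_0_compat; [apply Rabs_pos_lt|]; lra. }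
  assert (He1 : e <= d / 2) by apply Rmin_l.
  assert (He2 : e <= Rabs (q - p) / 2) by apply Rmin_r.
  destruct (Rlt_or_le p q) as [Hlt|Hle].
  - rewrite Rabs_right in He2 by lra.
    exists (p + e). split; [segment_lra|].
    apply Hy. rewrite Rabs_right; lra.
  - rewrite Rabs_left in He2 by lra.
    exists (p - e). split; [segment_lra|].
    apply Hy. rewrite Rabs_left; lra.
Qed.

Lemma first_root (f : R -> R) (a b : R) : a < b ->
  (forall x, a <= x <= b -> continuity_pt f x) -> 0 < f a -> f b < 0 ->
  exists z, a < z < b /\ f z = 0 /\ forall x, a <= x < z -> 0 < f x.
Proof.
  intros Hab Hc Ha Hb.
  set (E := fun x => a <= x <= b /\ forall y, a <= y <= x -> 0 < f y).
  assert (HaE : E a) by (split; [lra | intros y Hy; replace y with a by lra; exact Ha]).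
  destruct (completeness E) as [z [Hub Hlub]].
  { exists b. intros x [Hx _]. lra. }
  { exists a. exact HaE. }
  assert (Haz : a <= z) by (apply Hub; exact HaE).
  assert (Hzb : z <= b) by (apply Hlub; intros x [Hx _]; lra).
  assert (Hbelow : forall x, a <= x < z -> 0 < f x).
  { intros x Hx. destruct (Rlt_le_dec 0 (f x)) as [|Hfx]; [assumption|].
    assert (z <= x); [|lra].
    apply Hlub. intros w [_ Hw]. destruct (Rle_lt_dec w x) as [|Hxw]; [assumption|].
    specialize (Hw x ltac:(lra)). lra. }
  assert (Hz_not_pos : ~ 0 < f z).
  { intros Hpos. destruct (continuity_pt_pos_near f z (Hc z (conj Haz Hzb)) Hpos) as [d [Hd Hy]].
    destruct (Rlt_or_le z b) as [Hzb'|Hzb']; [|replace z with b in Hpos by lra; lra].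
    set (w := Rmin (z + d / 2) b).
    assert (Hw : z < w <= b) by (split; [apply Rmin_glb_lt; lra | apply Rmin_r]).
    assert (Hwd : w <= z + d / 2) by apply Rmin_l.
    assert (w <= z); [|lra].
    apply Hub. split; [lra|]. intros y Hy'.
    destruct (Rlt_or_le y z); [apply Hbelow; lra|].
    apply Hy. rewrite Rabs_right; lra. }
  assert (Hz_not_neg : ~ f z < 0).
  { intros Hneg.
    destruct (continuity_pt_pos_near (fun y => - f y) z) as [d [Hd Hy]].
    { apply (continuity_pt_opp f z), Hc; lra. }
    { lra. }
    destruct (Rle_lt_dec z a) as [Hza|Hza]; [replace z with a in Hneg by lra; lra|].
    set (w := Rmax (z - d / 2) a).
    assert (Hw : a <= w < z) by (split; [apply Rmax_r | apply Rmax_lub_lt; lra]).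
    assert (Hwd : z - d / 2 <= w) by apply Rmax_l.
    assert (0 < f w) by (apply Hbelow; lra).
    assert (0 < - f w) by (apply Hy; rewrite Rabs_left; lra).
    lra. }
  assert (Hfz : f z = 0) by lra.
  exists z. split; [|split; [exact Hfz | exact Hbelow]].
  split; [destruct (Req_dec a z) as [<-|] | destruct (Req_dec z b) as [->|]]; lra.
Qed.

Lemma continuity_pt_reflect (f : R -> R) (x : R) :
  continuity_pt f (- x) -> continuity_pt (fun y => f (- y)) x.
Proof.
  intros Hf. apply (continuity_pt_comp (fun y => - y) f).
  - apply (continuity_pt_opp (fun y => y)), continuity_pt_id.
  - exact Hf.
Qed.

Lemma last_root (f : R -> R) (a b : R) : a < b ->
  (forall x, a <= x <= b -> continuity_pt f x) -> 0 < f a -> f b < 0 ->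
  exists z, a < z < b /\ f z = 0 /\ forall x, z < x <= b -> f x < 0.
Proof.
  intros Hab Hc Ha Hb.
  destruct (first_root (fun y => - f (- y)) (- b) (- a)) as [w [Hw [Hfw Hneg]]].
  - lra.
  - intros y Hy. apply (continuity_pt_opp (fun y => f (- y))), continuity_pt_reflect, Hc. lra.
  - rewrite Ropp_involutive. lra.
  - rewrite Ropp_involutive. lra.
  - exists (- w). split; [lra|]. split; [lra|].
    intros x Hx. specialize (Hneg (- x) ltac:(lra)). rewrite Ropp_involutive in Hneg. lra.
Qed.

Lemma band_crossing_lt (F G : R -> R) (u v : R) : u < v ->
  (forall x, u <= x <= v -> continuity_pt F x /\ continuity_pt G x) ->
  (forall x, u <= x <= v -> G x < 1) -> 1 < F u -> F v < G v ->
  exists u' v', u < u' < v' /\ v' < v /\ F u' = 1 /\ F v' = G v' /\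
    forall x, u' < x < v' -> G x < F x < 1.
Proof.
  intros Huv Hc HG Hu Hv.
  destruct (last_root (fun x => F x - 1) u v) as [u' [Hu' [HFu' Hlt1]]]; try lra.
  { intros x Hx. apply (continuity_pt_minus F (fun _ => 1)).
    - apply Hc, Hx.
    - apply continuity_pt_const. intros ? ?. reflexivity. }
  { specialize (HG v ltac:(lra)). lra. }
  destruct (first_root (fun x => F x - G x) u' v) as [v' [Hv' [HFv' Hgt]]]; try lra.
  { intros x Hx. apply (continuity_pt_minus F G); apply Hc; lra. }
  { specialize (HG u' ltac:(lra)). lra. }
  exists u', v'. split; [lra|]. split; [lra|]. split; [lra|]. split; [lra|].
  intros x Hx. specialize (Hgt x ltac:(lra)). specialize (Hlt1 x ltac:(lra)). lra.
Qed.

Lemma band_crossing (F G : R -> R) (u v : R) : u <> v ->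
  (forall x, between u v x -> continuity_pt F x /\ continuity_pt G x) ->
  (forall x, between u v x -> G x < 1) -> 1 < F u -> F v < G v ->
  exists u' v', u' <> v' /\ (forall x, between u' v' x -> strictly_between u v x) /\
    F u' = 1 /\ F v' = G v' /\ forall x, strictly_between u' v' x -> G x < F x < 1.
Proof.
  intros Huv Hc HG Hu Hv. destruct (Rlt_or_le u v) as [Hlt|Hle].
  - destruct (band_crossing_lt F G u v) as (u' & v' & Hu' & Hv' & HFu & HFv & Hband); auto.
    + intros x Hx. apply Hc. segment_lra.
    + intros x Hx. apply HG. segment_lra.
    + exists u', v'. split; [lra|]. split; [intros x Hx; segment_lra|].
      split; [exact HFu|]. split; [exact HFv|].
      intros x Hx. apply Hband. segment_lra.
  - destruct (band_crossing_lt (fun y => F (- y)) (fun y => G (- y)) (- u) (- v))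
      as (u' & v' & Hu' & Hv' & HFu & HFv & Hband); try lra.
    + intros x Hx. split; apply continuity_pt_reflect, Hc; segment_lra.
    + intros x Hx. apply HG. segment_lra.
    + rewrite Ropp_involutive. exact Hu.
    + rewrite Ropp_involutive. exact Hv.
    + exists (- u'), (- v'). split; [lra|]. split; [intros x Hx; segment_lra|].
      split; [exact HFu|]. split; [exact HFv|].
      intros x Hx. specialize (Hband (- x) ltac:(segment_lra)).
      rewrite Ropp_involutive in Hband. exact Hband.
Qed.

Lemma dependent_choice_nat {A : Type} (P : nat -> A -> Prop) (Q : nat -> A -> A -> Prop) :
  (exists x, P 0%nat x) -> (forall n x, P n x -> exists y, P (S n) y /\ Q n x y) ->
  exists f : nat -> A, forall n, P n (f n) /\ Q n (f n) (f (S n)).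
Proof.
  intros H0 Hstep.
  destruct (constructive_indefinite_description _ H0) as [x0 Hx0].
  assert (next : forall n (s : {x | P n x}), {y | P (S n) y /\ Q n (proj1_sig s) y}).
  { intros n [x Hx]. apply constructive_indefinite_description, Hstep, Hx. }
  pose (g := fix g (n : nat) : {x | P n x} :=
    match n as n0 return {x | P n0 x} with
    | O => exist _ x0 Hx0
    | S m => exist _ (proj1_sig (next m (g m))) (proj1 (proj2_sig (next m (g m))))
    end).
  exists (fun n => proj1_sig (g n)). intros n. split.
  - exact (proj2_sig (g n)).
  - exact (proj2 (proj2_sig (next n (g n)))).
Qed.

Lemma nested_segments_meet (p q : nat -> R) :
  (forall n x, between (p (S n)) (q (S n)) x -> between (p n) (q n) x) ->
  exists L, forall n, between (p n) (q n) L.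
Proof.
  intros Hnest.
  set (lo := fun n => Rmin (p n) (q n)). set (hi := fun n => Rmax (p n) (q n)).
  assert (Hlohi : forall n, lo n <= hi n) by (intros n; unfold lo, hi; segment_lra).
  assert (Hstep : forall n, lo n <= lo (S n) /\ hi (S n) <= hi n).
  { intros n.
    assert (Hl := Hnest n (lo (S n)) ltac:(unfold lo; segment_lra)).
    assert (Hh := Hnest n (hi (S n)) ltac:(unfold hi; segment_lra)).
    unfold between in Hl, Hh. fold (lo n) (hi n) in Hl, Hh. lra. }
  assert (Hmono : forall n m, (n <= m)%nat -> lo n <= lo m /\ hi m <= hi n).
  { intros n m Hnm. induction Hnm as [|m _ IH]; [lra|]. specialize (Hstep m). lra. }
  assert (Hcross : forall n m, lo n <= hi m).
  { intros n m. destruct (Hmono n (Nat.max n m) ltac:(lia)).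
    destruct (Hmono m (Nat.max n m) ltac:(lia)). specialize (Hlohi (Nat.max n m)). lra. }
  destruct (completeness (fun x => exists n, x = lo n)) as [L [Hub Hlub]].
  { exists (hi 0%nat). intros x [n ->]. apply Hcross. }
  { exists (lo 0%nat). exists 0%nat. reflexivity. }
  exists L. intros n. split.
  - apply Hub. exists n. reflexivity.
  - apply Hlub. intros x [m ->]. apply Hcross.
Qed.

Section Shooting.

Variables a c : R.
Hypothesis a_pos : 0 < a.
Hypothesis c_bounds : 0 < c < 2.

Definition rho_next (n : nat) (t r : R) : R :=
  (c * tsin a / 2 + INR n * tsin (atan_sub a t) * r) / (INR (S n) * tsin t).

Definition orbit_step (n : nat) (s : R * R) : R * R :=
  let r := rho_next n (fst s) (snd s) in (rho_inv a (fst s) r, r).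

(* [orbit x n = (t_n, r_(n-1))] with [t_0 = x]; the dummy value [r_(-1) = 0] only ever
   appears multiplied by [INR 0]. *)
Fixpoint orbit (x : R) (n : nat) : R * R :=
  match n with
  | O => (x, 0)
  | S m => orbit_step m (orbit x m)
  end.

Definition traj (n : nat) (x : R) : R := fst (orbit x n).

Definition rprev (n : nat) (x : R) : R := snd (orbit x n).

Definition rcur (n : nat) (x : R) : R := rho_next n (traj n x) (rprev n x).

Definition admissible (k : nat) (x : R) : Prop := rho_min a (traj k x) < rcur k x < 1.

Definition bracket (N : nat) (p q : R) : Prop :=
  p <> q /\
  (forall x, between p q x -> 0 < x < a /\ forall k, (k < N)%nat -> admissible k x) /\
  1 < rcur N p /\ rcur N q < rho_min a (traj N q).

Lemma traj_S (n : nat) (x : R) : traj (S n) x = rho_inv a (traj n x) (rcur n x).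
Proof. reflexivity. Qed.

Lemma rprev_S (n : nat) (x : R) : rprev (S n) x = rcur n x.
Proof. reflexivity. Qed.

Lemma admissible_rcur_gt (k : nat) (x : R) : 0 < traj k x < a -> admissible k x -> -1 < rcur k x.
Proof.
  intros Ht Hadm. pose proof (rho_min_bounds a _ a_pos Ht). unfold admissible in Hadm. lra.
Qed.

Lemma traj_bounds (N : nat) (x : R) : 0 < x < a -> (forall k, (k < N)%nat -> admissible k x) ->
  forall k, (k <= N)%nat -> 0 < traj k x < a.
Proof.
  intros Hx Hadm k. induction k as [|k IH]; intros Hk; [exact Hx|].
  rewrite traj_S. apply rho_inv_bounds; auto; [apply IH; lia | apply Hadm; lia].
Qed.

Lemma rho_traj_S (n : nat) (x : R) : 0 < traj n x < a -> admissible n x ->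
  rho a (traj n x) (traj (S n) x) = rcur n x.
Proof. intros Ht Hadm. apply rho_rho_inv; auto. apply admissible_rcur_gt; auto. Qed.

Lemma continuity_pt_rcur (n : nat) (x : R) :
  continuity_pt (traj n) x -> continuity_pt (rprev n) x -> 0 < traj n x ->
  continuity_pt (rcur n) x.
Proof.
  intros Ht Hr Hpos.
  change (continuity_pt
            (fun y => (c * tsin a / 2 + INR n * tsin (atan_sub a (traj n y)) * rprev n y)
                      / (INR (S n) * tsin (traj n y))) x).
  continuity_auto; auto; try lra.
  apply Rgt_not_eq, Rmult_lt_0_compat; [apply lt_0_INR; lia | apply tsin_pos, Hpos].
Qed.

Lemma continuity_pt_traj_S (n : nat) (x : R) :
  continuity_pt (traj n) x -> continuity_pt (rcur n) x -> 0 < traj n x < a -> -1 < rcur n x ->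
  continuity_pt (traj (S n)) x.
Proof.
  intros Ht Hr Hin Hgt.
  change (continuity_pt (fun y => (1 - rcur n y) / ((1 + rcur n y) * atan_sub a (traj n y))) x).
  continuity_auto; auto; try lra.
  pose proof (atan_sub_pos a (traj n x) ltac:(lra)). nra.
Qed.

Lemma continuity_pt_orbit (N : nat) (x : R) :
  (forall k, (k < N)%nat -> 0 < traj k x < a /\ -1 < rcur k x) ->
  continuity_pt (traj N) x /\ continuity_pt (rprev N) x.
Proof.
  induction N as [|N IH]; intros Hk.
  - split; [apply continuity_pt_id|]. apply continuity_pt_const. intros ? ?. reflexivity.
  - destruct IH as [IHt IHr]; [intros k Hkn; apply Hk; lia|].
    destruct (Hk N ltac:(lia)) as [Hin Hgt].
    assert (Hr : continuity_pt (rcur N) x) by (apply continuity_pt_rcur; auto; lra).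
    split; [apply continuity_pt_traj_S|]; auto.
Qed.

Lemma bracket_inside_sweep (M : nat) (u v : R) : u <> v ->
  (forall x, between u v x ->
     continuity_pt (traj M) x /\ continuity_pt (rprev M) x /\ 0 <= traj M x <= a) ->
  (forall x, strictly_between u v x -> 0 < x < a /\ forall k, (k < M)%nat -> admissible k x) ->
  traj M u = 0 -> 0 <= rprev M u -> traj M v = a ->
  exists p q, bracket M p q /\ forall x, between p q x -> strictly_between u v x.
Proof.
  intros Huv Hcont Hadm Hu Hru Hv.
  set (num := fun x => c * tsin a / 2 + INR M * tsin (atan_sub a (traj M x)) * rprev M x).
  set (den := fun x => INR (S M) * tsin (traj M x)).
  assert (Hrcur : forall x, rcur M x = num x / den x) by reflexivity.
  pose proof (tsin_pos a a_pos) as Hsa. pose proof (pos_INR M) as HM.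
  assert (Hca : 0 < c * tsin a) by (apply Rmult_lt_0_compat; lra).
  assert (HSM : 1 <= INR (S M)) by (rewrite S_INR; lra).
  assert (Huv_b : between u v u /\ between u v v) by (split; segment_lra).
  set (m := (u + v) / 2).
  destruct (exists_pos_strictly_between (fun x => num x - den x) u m) as [p [Hp Hnp]].
  - unfold m. lra.
  - destruct (Hcont u (proj1 Huv_b)) as (Ht & Hr & Hb).
    unfold num, den. continuity_auto; auto; lra.
  - unfold num, den. cbv beta. rewrite Hu, tsin_0, atan_sub_0_r.
    assert (0 <= INR M * tsin a * rprev M u) by (apply Rmult_le_pos; [apply Rmult_le_pos|]; lra).
    lra.
  destruct (exists_pos_strictly_between (fun x => den x * rho_min a (traj M x) - num x) v m)
    as [q [Hq Hnq]].
  - unfold m. lra.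
  - destruct (Hcont v (proj2 Huv_b)) as (Ht & Hr & Hb).
    unfold num, den. continuity_auto; auto; lra.
  - unfold num, den. cbv beta. rewrite Hv, atan_sub_diag, tsin_0, rho_min_diag. nra.
  assert (Hsub : forall x, between p q x -> strictly_between u v x)
    by (intros; unfold m in *; segment_lra).
  assert (Hden : forall x, between p q x -> 0 < den x).
  { intros x Hx. destruct (Hadm x (Hsub x Hx)) as [Hx0 Hk].
    apply Rmult_lt_0_compat; [lra|]. apply tsin_pos, (traj_bounds M x Hx0 Hk M); lia. }
  exists p, q. split; [|exact Hsub].
  split; [unfold m in *; segment_lra|]. split; [intros x Hx; apply Hadm, Hsub, Hx|]. split.
  - rewrite Hrcur. apply Rlt_div_r; [apply Hden; segment_lra | lra].
  - rewrite Hrcur. apply Rlt_div_l; [apply Hden; segment_lra | lra].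
Qed.

Lemma bracket_0 : exists p q, bracket 0 p q.
Proof.
  destruct (bracket_inside_sweep 0 0 a) as (p & q & Hpq & _);
    [lra | | | reflexivity | apply Rle_refl | reflexivity |].
  - intros x Hx. split; [apply continuity_pt_id|]. split; [|cbn; segment_lra].
    apply continuity_pt_const. intros ? ?. reflexivity.
  - intros x Hx. split; [segment_lra | intros k Hk; lia].
  - exists p, q. exact Hpq.
Qed.

Lemma bracket_refine (N : nat) (p q : R) : bracket N p q ->
  exists p' q', bracket (S N) p' q' /\ forall x, between p' q' x -> between p q x.
Proof.
  intros (Hpq & Hseg & Hp & Hq).
  assert (Htraj : forall x, between p q x -> forall k, (k <= N)%nat -> 0 < traj k x < a).
  { intros x Hx. destruct (Hseg x Hx) as [Hx0 Hadm]. exact (traj_bounds N x Hx0 Hadm). }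
  assert (Horbit : forall x, between p q x ->
                     continuity_pt (traj N) x /\ continuity_pt (rprev N) x).
  { intros x Hx. apply continuity_pt_orbit. intros k Hk.
    assert (Hk' : 0 < traj k x < a) by (apply Htraj; [exact Hx | lia]).
    split; [exact Hk'|]. apply admissible_rcur_gt; [exact Hk'|]. apply Hseg; auto. }
  set (G := fun x => rho_min a (traj N x)).
  assert (HG : forall x, between p q x -> -1 < G x < 1)
    by (intros x Hx; apply rho_min_bounds, Htraj; auto).
  destruct (band_crossing (rcur N) G p q) as (u & v & Huv & Hsub & Hu & Hv & Hband); auto.
  { intros x Hx. destruct (Horbit x Hx) as [Ht Hr]. pose proof (Htraj x Hx N (le_n N)).
    split; [apply continuity_pt_rcur; auto; lra|].
    unfold G. continuity_auto; auto; lra. }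
  { intros x Hx. apply HG, Hx. }
  assert (Huv_pq : forall x, between u v x -> between p q x)
    by (intros x Hx; specialize (Hsub x Hx); segment_lra).
  assert (Hrcur : forall x, between u v x -> -1 < rcur N x).
  { intros x Hx. pose proof (HG x (Huv_pq x Hx)).
    destruct (between_cases u v x Hx) as [->|[->|Hin]]; [lra | unfold G in *; lra |].
    specialize (Hband x Hin). lra. }
  destruct (bracket_inside_sweep (S N) u v) as (p' & q' & Hbr & Hsub'); auto.
  - intros x Hx. pose proof (Huv_pq x Hx) as Hx'. pose proof (Htraj x Hx' N (le_n N)) as Htn.
    destruct (Horbit x Hx') as [Ht Hr].
    assert (Hrc : continuity_pt (rcur N) x) by (apply continuity_pt_rcur; auto; lra).
    split; [apply continuity_pt_traj_S; auto|]. split; [exact Hrc|].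
    rewrite traj_S. destruct (between_cases u v x Hx) as [->|[->|Hin]].
    + rewrite Hu, rho_inv_1. lra.
    + rewrite Hv. rewrite rho_inv_rho_min; auto. lra.
    + pose proof (rho_inv_bounds a _ _ a_pos Htn (Hband x Hin)). lra.
  - intros x Hx. assert (Hx' : between p q x) by (apply Huv_pq; segment_lra).
    split; [apply Hseg, Hx'|]. intros k Hk. destruct (Nat.eq_dec k N) as [->|Hne].
    + apply Hband, Hx.
    + apply Hseg; [exact Hx' | lia].
  - rewrite traj_S, Hu. apply rho_inv_1.
  - rewrite rprev_S, Hu. lra.
  - rewrite traj_S, Hv. apply rho_inv_rho_min; auto. apply Htraj; [apply Huv_pq; segment_lra | lia].
  - exists p', q'. split; [exact Hbr|].
    intros x Hx. apply Huv_pq. specialize (Hsub' x Hx). segment_lra.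
Qed.

Lemma exists_admissible_orbit : exists x, 0 < x < a /\ forall k, admissible k x.
Proof.
  destruct (dependent_choice_nat (fun N s => bracket N (fst s) (snd s))
              (fun _ s s' => forall x, between (fst s') (snd s') x -> between (fst s) (snd s) x))
    as [s Hs].
  - destruct bracket_0 as (p & q & H). exists (p, q). exact H.
  - intros n [p q] H. destruct (bracket_refine n p q H) as (p' & q' & H').
    exists (p', q'). exact H'.
  - destruct (nested_segments_meet (fun n => fst (s n)) (fun n => snd (s n))) as [L HL].
    { intros n. apply Hs. }
    exists L. split.
    + destruct (Hs 0%nat) as [(_ & Hseg & _) _]. apply Hseg, HL.
    + intros k. destruct (Hs (S k)) as [(_ & Hseg & _) _]. apply Hseg; [apply HL | lia].
Qed.

Lemma orbit_recurrence (x : R) : 0 < x < a -> (forall k, admissible k x) -> forall n,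
  INR (S n) * tsin (traj n x) * rho a (traj n x) (traj (S n) x)
  = c * tsin a / 2 + INR n * tsin (atan_sub a (traj n x)) * rho a (traj (pred n) x) (traj n x).
Proof.
  intros Hx Hadm n.
  assert (Htraj : forall k, 0 < traj k x < a) by (intros k; apply (traj_bounds k); auto).
  rewrite rho_traj_S by auto.
  replace (INR n * tsin (atan_sub a (traj n x)) * rho a (traj (pred n) x) (traj n x))
    with (INR n * tsin (atan_sub a (traj n x)) * rprev n x).
  - assert (0 < INR (S n)) by (apply lt_0_INR; lia).
    assert (0 < tsin (traj n x)) by apply tsin_pos, Htraj.
    unfold rcur, rho_next. field. split; lra.
  - destruct n as [|m]; [simpl; ring|].
    simpl pred. rewrite rprev_S, rho_traj_S; auto.
Qed.

End Shooting.

Theorem theorem4 (alpha c : R) :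
  0 < alpha < PI -> 0 < c < 2 ->
  exists (x : nat -> C) (beta : nat -> R),
    (forall n, x n = cis (beta n) /\ 0 < beta n < alpha) /\
    (* denominators eps + x_n x_{n+1} are nonzero along the solution *)
    (forall n, (cis alpha + x n * x (S n))%C <> 0%C) /\
    (* equation at n = 0: second term omitted *)
    term1 (cis alpha) 0 (x 0%nat) (x 1%nat) = rhs (cis alpha) c (x 0%nat) /\
    (* equation at n >= 1 *)
    (forall n, n <> 0%nat ->
       (term1 (cis alpha) n (x n) (x (S n))
        - term2 (cis alpha) n (x (pred n)) (x n))%C = rhs (cis alpha) c (x n)).
Proof.
  intros Halpha Hc.
  set (a := tan (alpha / 2)).
  assert (Ha : 0 < a).
  { unfold a, tan. apply Rdiv_lt_0_compat; [apply sin_gt_0 | apply cos_gt_0]; lra. }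
  assert (Halpha_a : alpha = 2 * atan a) by (unfold a; rewrite atan_tan; lra).
  rewrite Halpha_a, cis_2atan.
  destruct (exists_admissible_orbit a c Ha Hc) as (x0 & Hx0 & Hadm).
  set (t := fun n => traj a c n x0).
  assert (Ht : forall n, 0 < t n < a) by (intros n; apply (traj_bounds a c Ha n); auto).
  assert (Heq : forall n,
    (term1 (cayley a) n (cayley (t n)) (cayley (t (S n)))
     - term2 (cayley a) n (cayley (t (pred n))) (cayley (t n)))%C = rhs (cayley a) c (cayley (t n)))
    by (intros n; apply equation_of_recurrence, orbit_recurrence; auto).
  exists (fun n => cayley (t n)), (fun n => 2 * atan (t n)).
  split; [|split; [|split]].
  - intros n. rewrite cis_2atan. split; [reflexivity|].
    pose proof (atan_increasing 0 (t n) (proj1 (Ht n))).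
    pose proof (atan_increasing (t n) a (proj2 (Ht n))). rewrite atan_0 in *. lra.
  - intros n. apply cayley_add_mul_neq0; auto.
  - rewrite <- (Heq 0%nat). unfold term2. simpl INR. ring.
  - intros n _. apply Heq.
Qed.
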